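(* Let $R$ be a ring, $\mathcal{X}$ a class of left $R$-modules and $\mathcal{Y}$ a class of right $R$-modules, and assume $\mathcal{GF}_{(\mathcal{X},\mathcal{Y})}(R)$ is closed under extensions. Then a left $R$-module $M$ has a $\mathcal{Y}\otimes_R-$ exact $\mathcal{X}$-resolution if and only if it has a $\mathcal{Y}\otimes_R-$ exact $\mathcal{GF}_{(\mathcal{X},\mathcal{Y})}(R)$-resolution.
   Context: An exact sequence $\mathbb{E}$ of left modules is $\mathcal{Y}\otimes_R-$ exact if $Y\otimes_R\mathbb{E}$ is exact for all $Y\in\mathcal{Y}$. For a class $\mathcal{A}$, an $\mathcal{A}$-resolution of $M$ is an exact sequence $\cdots\to A_1\to A_0\to M\to 0$ with all $A_i\in\mathcal{A}$. $M$ is Gorenstein $(\mathcal{X},\mathcal{Y})$-flat if there is a $\mathcal{Y}\otimes_R-$ exact exact sequence $\cdots\to X_1\to X_0\to X^0\to X^1\to\cdots$ in $\mathcal{X}$ with $M\cong\ker(X^0\to X^1)$; $\mathcal{GF}_{(\mathcal{X},\mathcal{Y})}(R)$ is the class of these. *)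

(* Modules over a (possibly noncommutative) ring R:
   left R-modules = lmodType R, right R-modules = lmodType R^c.
   The tensor product Y (x)_R M is realised literally as the quotient of the
   free abelian group {freeg (Y * M) / int} by the subgroup generated by the
   bilinearity / balancing relations; we never build the quotient type but
   work with representatives modulo that subgroup ("trel"). *)
From HB Require Import structures.
From mathcomp Require Import all_boot all_algebra.
From mathcomp Require Import freeg.

Set Implicit Arguments.
Unset Strict Implicit.
Unset Printing Implicit Defensive.

Import GRing.Theory.
Local Open Scope ring_scope.

Definition tfree (R : pzRingType) (Y : lmodType R^c) (M : lmodType R) :=
  {freeg (Y * M)%type / int}.

Definition tgen (R : pzRingType) (Y : lmodType R^c) (M : lmodType R)
    (x : tfree Y M) : Prop :=
  (exists (y1 y2 : Y) (m : M),
      x = << (y1 + y2, m) >> - << (y1, m) >> - << (y2, m) >>) \/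
  (exists (y : Y) (m1 m2 : M),
      x = << (y, m1 + m2) >> - << (y, m1) >> - << (y, m2) >>) \/
  (exists (r : R) (y : Y) (m : M),
      (* y . r  is  (r : R^c) *: y  in the right module Y *)
      x = << ((r : R^c) *: y, m) >> - << (y, r *: m) >>).

(* x lies in the subgroup generated by the relations, i.e. x represents
   0 in Y (x)_R M *)
Definition trel (R : pzRingType) (Y : lmodType R^c) (M : lmodType R)
    (x : tfree Y M) : Prop :=
  exists s : seq (int * tfree Y M),
    foldr (fun p P => tgen p.2 /\ P) True s /\ x = \sum_(p <- s) p.2 *~ p.1.

Definition tmap (R : pzRingType) (Y : lmodType R^c) (A B : lmodType R)
    (f : A -> B) : tfree Y A -> tfree Y B :=
  fglift (fun p : (Y * A)%type => << (p.1, f p.2) >> : tfree Y B).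

Definition exact3 (R : pzRingType) (A B C : lmodType R)
    (f : {linear A -> B}) (g : {linear B -> C}) : Prop :=
  (forall a, g (f a) = 0) /\ (forall b, g b = 0 -> exists a, b = f a).

(* exactness of Y(x)A --1(x)f--> Y(x)B --1(x)g--> Y(x)C at Y(x)B *)
Definition texact3 (R : pzRingType) (Y : lmodType R^c) (A B C : lmodType R)
    (f : {linear A -> B}) (g : {linear B -> C}) : Prop :=
  (forall s : tfree Y A, trel (tmap g (tmap f s))) /\
  (forall t : tfree Y B, trel (tmap g t) ->
     exists s : tfree Y A, trel (t - tmap f s)).

(* Y(x)A --1(x)e--> Y(x)M --> 0 exact at Y(x)M (i.e. 1(x)e surjective) *)
Definition tsurj (R : pzRingType) (Y : lmodType R^c) (A M : lmodType R)
    (e : {linear A -> M}) : Prop :=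
  forall t : tfree Y M, exists s : tfree Y A, trel (t - tmap e s).

Definition lclass (R : pzRingType) := lmodType R -> Prop.
Definition rclass (R : pzRingType) := lmodType R^c -> Prop.

(* The exact sequence
   ... -> X_1 -> X_0 -> X^0 -> X^1 -> ...  is written as a chain complex
   C : int -> modules with d i : C (i+1) -> C i, so X_n = C n (n >= 0) and
   X^n = C (-n-1); the map X^0 -> X^1 is d (-2). *)
Definition GF (R : pzRingType) (X : lclass R) (Yc : rclass R) (M : lmodType R)
  : Prop :=
  exists (C : int -> lmodType R) (d : forall i : int, {linear C (i + 1) -> C i}),
    (forall i, X (C i)) /\
    (forall i, exact3 (d (i + 1)) (d i)) /\
    (forall Y, Yc Y -> forall i, texact3 Y (d (i + 1)) (d i)) /\
    (exists h : {linear M -> C (-2 + 1)},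
        injective h /\ forall c, d (-2) c = 0 <-> exists m, c = h m).

Definition has_tex_res (R : pzRingType) (Yc : rclass R) (P : lclass R)
    (M : lmodType R) : Prop :=
  exists (A : nat -> lmodType R) (d : forall n, {linear A n.+1 -> A n})
         (e : {linear A 0%N -> M}),
    (forall n, P (A n)) /\
    (forall m : M, exists a, e a = m) /\
    exact3 (d 0%N) e /\
    (forall n, exact3 (d n.+1) (d n)) /\
    (forall Y, Yc Y ->
       tsurj Y e /\ texact3 Y (d 0%N) e /\
       forall n, texact3 Y (d n.+1) (d n)).

Definition ext_closed (R : pzRingType) (P : lclass R) : Prop :=
  forall (A B C : lmodType R) (f : {linear A -> B}) (g : {linear B -> C}),
    injective f -> exact3 f g -> (forall c, exists b, g b = c) ->
    P A -> P C -> P B.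

(* The forward implication holds because every module A of X is Gorenstein
   (X,Y)-flat, via the complete resolution ... -> A --0--> A --id--> A --0--> ...
   For the converse, let ... -> G_1 -> G_0 --e--> M -> 0 be a Y(x)- exact
   GF-resolution.  A complete resolution of G_0 gives a surjection
   p : X_0 -> G_0 with X_0 in X whose kernel is Gorenstein flat and remains a
   submodule of X_0 after applying Y(x)-.  The pullback P = X_0 x_{G_0} G_1 is an
   extension of G_1 by ker p, hence Gorenstein flat by closure under extensions,
   and ... -> G_3 -> G_2 -> P -> ker (e p) -> 0 is a Y(x)- exact GF-resolution;
   a diagram chase shows that 0 -> ker (e p) -> X_0 -> M -> 0 is Y(x)- exact too.
   Iterating on ker (e p) and splicing the short exact sequences yields the
   Y(x)- exact X-resolution of M. *)

From HB Require Import structures.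
From mathcomp Require Import all_boot all_algebra freeg.
From Stdlib Require Import IndefiniteDescription.

Set Implicit Arguments.
Unset Strict Implicit.
Unset Printing Implicit Defensive.

Import GRing.Theory.
Local Open Scope ring_scope.

Section TensorRelations.
Variables (R : pzRingType) (Y : lmodType R^c) (M : lmodType R).
Implicit Types (x y : tfree Y M) (s : seq (int * tfree Y M)).

Let all_tgen s := foldr (fun p P => tgen p.2 /\ P) True s.

Lemma all_tgen_cat s1 s2 : all_tgen (s1 ++ s2) <-> all_tgen s1 /\ all_tgen s2.
Proof. by elim: s1 => [|p s1 IH] /=; [tauto | move: IH; tauto]. Qed.

Lemma trel0 : trel (0 : tfree Y M).
Proof. by exists [::]; rewrite big_nil. Qed.

Lemma trel_gen x : tgen x -> trel x.
Proof. by move=> gx; exists [:: (1, x)]; rewrite big_seq1. Qed.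

Lemma trelD x y : trel x -> trel y -> trel (x + y).
Proof.
move=> [s1 [g1 ->]] [s2 [g2 ->]]; exists (s1 ++ s2).
by rewrite big_cat; split=> //; apply/all_tgen_cat.
Qed.

Lemma trelMz x k : trel x -> trel (x *~ k).
Proof.
move=> [s [gs ->]]; exists [seq (p.1 * k, p.2) | p <- s]; split.
  by elim: s gs => [|p s IH] //= [? ?]; split => //; apply: IH.
by rewrite big_map mulrz_suml; apply: eq_bigr => p _; rewrite mulrzA.
Qed.

Lemma trelN x : trel x -> trel (- x).
Proof. by move=> rx; rewrite -mulrN1z; apply: trelMz. Qed.

Lemma trelB x y : trel x -> trel y -> trel (x - y).
Proof. by move=> rx ry; apply: trelD => //; apply: trelN. Qed.

Lemma trel_addl (y1 y2 : Y) (m : M) :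
  trel (<< (y1 + y2, m) >> - << (y1, m) >> - << (y2, m) >> : tfree Y M).
Proof. by apply: trel_gen; left; exists y1, y2, m. Qed.

Lemma trel_addr (y : Y) (m1 m2 : M) :
  trel (<< (y, m1 + m2) >> - << (y, m1) >> - << (y, m2) >> : tfree Y M).
Proof. by apply: trel_gen; right; left; exists y, m1, m2. Qed.

Lemma trel_scale (r : R) (y : Y) (m : M) :
  trel (<< ((r : R^c) *: y, m) >> - << (y, r *: m) >> : tfree Y M).
Proof. by apply: trel_gen; right; right; exists r, y, m. Qed.

Lemma trel_zero (y : Y) : trel (<< (y, 0) >> : tfree Y M).
Proof. by have := trelN (trel_addr y 0 0); rewrite addr0 subrr sub0r opprK. Qed.

Lemma freeg_indZ (P : tfree Y M -> Prop) :
  P 0 -> (forall k z D, P D -> P (<< z >> *~ k + D)) -> forall D, P D.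
Proof.
move=> P0 PS; apply: freeg_ind_dom0 => // k z D _ _ PD.
by rewrite -[k]intz -freegU_mulz; apply: PS.
Qed.

End TensorRelations.

HB.instance Definition _ (R : pzRingType) (Y : lmodType R^c) (A B : lmodType R)
    (f : A -> B) :=
  GRing.isZmodMorphism.Build (tfree Y A) (tfree Y B) (tmap f) (lift_is_additive _).

Section TensorMap.
Variables (R : pzRingType) (Y : lmodType R^c).
Implicit Types A B C : lmodType R.

Lemma tmapU A B (f : A -> B) y a : tmap f << (y, a) >> = << (y, f a) >> :> tfree Y B.
Proof. by rewrite /tmap liftU scale1r. Qed.

Lemma tmapD A B (f : A -> B) (s t : tfree Y A) : tmap f (s + t) = tmap f s + tmap f t.
Proof. exact: raddfD. Qed.

Lemma tmapB A B (f : A -> B) (s t : tfree Y A) : tmap f (s - t) = tmap f s - tmap f t.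
Proof. exact: raddfB. Qed.

Lemma tfree_additive_ext A (V : zmodType) (phi psi : {additive tfree Y A -> V}) :
  (forall z, phi << z >> = psi << z >>) -> phi =1 psi.
Proof.
move=> eq_gen; elim/freeg_indZ => [|k z D eqD]; first by rewrite !raddf0.
by rewrite !raddfD !raddfMz eq_gen eqD.
Qed.

Lemma tmap_comp A B C (f : A -> B) (g : B -> C) (t : tfree Y A) :
  tmap g (tmap f t) = tmap (g \o f) t.
Proof.
apply: (@tfree_additive_ext A _ (tmap (Y := Y) g \o tmap f) (tmap (g \o f))) => -[y a].
by rewrite /= !tmapU.
Qed.

Lemma eq_tmap A B (f g : A -> B) : f =1 g -> tmap f =1 tmap g :> (tfree Y A -> _).
Proof.
move=> fg; apply: (@tfree_additive_ext A _ (tmap f) (tmap g)) => -[y a].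
by rewrite /= !tmapU fg.
Qed.

Lemma tmap_id A (t : tfree Y A) : tmap id t = t.
Proof. by apply: (@tfree_additive_ext A _ (tmap id) idfun) => -[y a]; rewrite /= tmapU. Qed.

Lemma tgen_tmap A B (f : {linear A -> B}) (x : tfree Y A) : tgen x -> tgen (tmap f x).
Proof.
case=> [[y1 [y2 [a ->]]]|[[y [a1 [a2 ->]]]|[r [y [a ->]]]]]; rewrite !raddfB /= !tmapU.
- by left; exists y1, y2, (f a).
- by right; left; exists y, (f a1), (f a2); rewrite linearD.
- by right; right; exists r, y, (f a); rewrite linearZ.
Qed.

Lemma trel_tmap A B (f : {linear A -> B}) (t : tfree Y A) : trel t -> trel (tmap f t).
Proof.
move=> [s [gs ->]]; exists [seq (p.1, tmap f p.2) | p <- s]; split.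
  by elim: s gs => [|p s IH] //= [gp gs]; split; [apply: tgen_tmap | apply: IH].
by rewrite raddf_sum big_map; apply: eq_bigr => p _; rewrite raddfMz.
Qed.

Lemma trel_tmap0 A B (f : A -> B) (t : tfree Y A) : f =1 (fun=> 0) -> trel (tmap f t).
Proof.
move=> f0; elim/freeg_indZ: t => [|k [y a] D rD]; first by rewrite raddf0; apply: trel0.
by rewrite raddfD raddfMz /= tmapU f0; apply: trelD => //; apply/trelMz/trel_zero.
Qed.

Lemma tmap_surj A B (f : A -> B) :
  (forall b, exists a, f a = b) -> forall t : tfree Y B, exists s, tmap f s = t.
Proof.
move=> f_surj; elim/freeg_indZ => [|k [y b] D [s <-]]; first by exists 0; rewrite raddf0.
have [a <-] := f_surj b.
by exists (<< (y, a) >> *~ k + s); rewrite raddfD raddfMz /= tmapU.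
Qed.

Definition tinj A B (f : A -> B) := forall v : tfree Y A, trel (tmap f v) -> trel v.

Lemma tsurj_of_surj A B (f : {linear A -> B}) :
  (forall b, exists a, f a = b) -> tsurj Y f.
Proof.
by move=> f_surj t; have [s <-] := tmap_surj f_surj t; exists s; rewrite subrr; apply: trel0.
Qed.

End TensorMap.

Section RightExactness.
Variables (R : pzRingType) (Y : lmodType R^c) (A B C : lmodType R).
Variables (f : {linear A -> B}) (g : {linear B -> C}).
Hypothesis g_surj : forall c, exists b, g b = c.
Hypothesis ker_g : forall b, g b = 0 -> exists a, b = f a.

Let in_img (t : tfree Y B) := exists s, trel (t - tmap f s).

Let in_img_rel t : trel t -> in_img t.
Proof. by exists 0; rewrite raddf0 subr0. Qed.

Let in_imgD t1 t2 : in_img t1 -> in_img t2 -> in_img (t1 + t2).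
Proof.
move=> [s1 r1] [s2 r2]; exists (s1 + s2).
by rewrite raddfD opprD addrACA; apply: trelD.
Qed.

Let in_imgMz t k : in_img t -> in_img (t *~ k).
Proof. by move=> [s r]; exists (s *~ k); rewrite raddfMz -mulrzBl; apply: trelMz. Qed.

Let in_img_trans t1 t2 t3 :
  in_img (t1 - t2) -> in_img (t2 - t3) -> in_img (t1 - t3).
Proof. by move=> i12 i23; have := in_imgD i12 i23; rewrite addrA subrK. Qed.

(* A set-theoretic section [sect] of [g] induces an inverse of
   Y(x)B / im (1(x)f) -> Y(x)C: it maps relations into im (1(x)f). *)
Let g_section c : exists b, g b == c.
Proof. by have [b <-] := g_surj c; exists b. Qed.

Let sect c : B := xchoose (g_section c).

Let sectK c : g (sect c) = c.
Proof. exact/eqP/(xchooseP (g_section c)). Qed.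

Let sect_defect b c : g b = c -> exists a, b = sect c + f a.
Proof.
move=> gb; have [a fa] : exists a, b - sect c = f a.
  by apply: ker_g; rewrite linearB /= sectK gb subrr.
by exists a; rewrite -fa addrC subrK.
Qed.

Let in_img_shift (y : Y) b a : in_img (<< (y, b + f a) >> - << (y, b) >>).
Proof. by exists << (y, a) >>; rewrite tmapU; apply: trel_addr. Qed.

Let in_img_shiftN (y : Y) b a : in_img (<< (y, b) >> - << (y, b + f a) >>).
Proof. by rewrite -opprB -mulrN1z; apply/in_imgMz/in_img_shift. Qed.

Let in_img_sect_defect t : in_img (t - tmap sect (tmap g t)).
Proof.
elim/freeg_indZ: t => [|k [y b] D iD]; first by rewrite !raddf0 addr0; apply/in_img_rel/trel0.
rewrite !raddfD !raddfMz /= !tmapU addrACA -mulrzDl.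
apply: in_imgD => //; apply: in_imgMz.
by have [a {1}->] := sect_defect (erefl (g b)); apply: in_img_shift.
Qed.

Let in_img_sect_tgen x : tgen x -> in_img (tmap sect x).
Proof.
case=> [[y1 [y2 [c ->]]]|[[y [c1 [c2 ->]]]|[r [y [c ->]]]]]; rewrite !raddfB /= !tmapU.
- exact/in_img_rel/trel_addl.
- have [a sectD] : exists a, sect c1 + sect c2 = sect (c1 + c2) + f a.
    by apply: sect_defect; rewrite linearD /= !sectK.
  rewrite -addrA -opprD; apply: (in_img_trans (t2 := << (y, sect c1 + sect c2) >>)).
    by rewrite sectD; apply: in_img_shiftN.
  by apply: in_img_rel; rewrite opprD addrA; apply: trel_addr.
- have [a sectZ] : exists a, r *: sect c = sect (r *: c) + f a.
    by apply: sect_defect; rewrite linearZ /= sectK.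
  apply: (in_img_trans (t2 := << (y, r *: sect c) >>)); first exact/in_img_rel/trel_scale.
  by rewrite sectZ; apply: in_img_shift.
Qed.

Let in_img_sect_rel t : trel t -> in_img (tmap sect t).
Proof.
move=> [s [gs ->]]; rewrite raddf_sum.
elim: s gs => [|p s IH] /= => [_|[gp gs]]; first by rewrite big_nil; apply/in_img_rel/trel0.
by rewrite big_cons raddfMz; apply: in_imgD; [apply/in_imgMz/in_img_sect_tgen | apply: IH].
Qed.

Lemma tmap_right_exact (t : tfree Y B) : trel (tmap g t) -> exists s, trel (t - tmap f s).
Proof.
move=> rgt; rewrite -(subrK (tmap sect (tmap g t)) t).
by apply: in_imgD; [apply: in_img_sect_defect | apply: in_img_sect_rel].
Qed.

End RightExactness.

Section ExactnessBasics.
Variables (R : pzRingType) (Y : lmodType R^c).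
Implicit Types A B C D K : lmodType R.

Lemma exact3_id0 A : exact3 (idfun : {linear A -> A}) (\0 : {linear A -> A}).
Proof. by split=> // a _; exists a. Qed.

Lemma exact3_0id A : exact3 (\0 : {linear A -> A}) (idfun : {linear A -> A}).
Proof. by split=> // a a0; exists 0; rewrite raddf0. Qed.

Lemma texact3_id0 A : texact3 Y (idfun : {linear A -> A}) (\0 : {linear A -> A}).
Proof.
split=> [s|t _]; first exact: trel_tmap0.
by exists t; rewrite tmap_id subrr; apply: trel0.
Qed.

Lemma texact3_0id A : texact3 Y (\0 : {linear A -> A}) (idfun : {linear A -> A}).
Proof.
split=> [s|t]; first by rewrite tmap_id; apply: trel_tmap0.
by rewrite tmap_id => rt; exists 0; rewrite raddf0 subr0.
Qed.

Lemma exact3_surj_comp A B C D (q : {linear A -> B}) (i : {linear B -> C})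
    (g : {linear C -> D}) :
  (forall b, exists a, q a = b) -> exact3 i g -> exact3 (i \o q) g.
Proof.
move=> q_surj [gi0 ker_g]; split=> [a|c /ker_g [b ->]]; first exact: gi0.
by have [a <-] := q_surj b; exists a.
Qed.

Lemma exact3_comp_inj A B C D (f : {linear A -> B}) (g : {linear B -> C})
    (j : {linear C -> D}) :
  injective j -> exact3 f g -> exact3 f (j \o g).
Proof.
move=> j_inj [gf0 ker_g]; split=> [a|b jgb0]; first by rewrite /= gf0 raddf0.
by apply: ker_g; apply: j_inj; rewrite raddf0.
Qed.

Lemma texact3_surj_comp A B C D (q : {linear A -> B}) (i : {linear B -> C})
    (g : {linear C -> D}) :
  (forall b, exists a, q a = b) -> texact3 Y i g -> texact3 Y (i \o q) g.
Proof.
move=> q_surj [gi0 ker_g]; split=> [s|t /ker_g [s rs]].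
  by rewrite -(tmap_comp q i); apply: gi0.
by have [u qu] := tmap_surj q_surj s; exists u; rewrite -(tmap_comp q i) qu.
Qed.

Lemma texact3_comp_inj A B C D (f : {linear A -> B}) (g : {linear B -> C})
    (j : {linear C -> D}) :
  tinj Y j -> texact3 Y f g -> texact3 Y f (j \o g).
Proof.
move=> j_tinj [gf0 ker_g]; split=> [s|t].
  by rewrite -tmap_comp; apply: trel_tmap.
by rewrite -tmap_comp => /j_tinj /ker_g.
Qed.

Lemma tinj_of_texact A B C K (k : {linear A -> B}) (f : {linear B -> C})
    (q : {linear B -> K}) (i : {linear K -> C}) :
  (forall x, exists b, q b = x) -> (forall a, q (k a) = 0) -> i \o q =1 f ->
  texact3 Y k f -> tinj Y i.
Proof.
move=> q_surj qk0 iqf [_ ker_f] v; have [s <-] := tmap_surj q_surj v.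
rewrite tmap_comp (eq_tmap iqf) => /ker_f [s' rs'].
rewrite -(subrK (tmap k s') s) tmapD; apply: trelD; first exact: trel_tmap.
by rewrite tmap_comp; apply: trel_tmap0.
Qed.

End ExactnessBasics.

Lemma odd_absz_add1 (i : int) : odd `|i + 1| = ~~ odd `|i|.
Proof. by case: i => [n|[|n]] //=; rewrite ?addn1 ?subn1 ?negbK. Qed.

Section XGorensteinFlat.
Variables (R : pzRingType) (X : lclass R) (Yc : rclass R).

Definition alt_map (A : lmodType R) (i : int) : {linear A -> A} :=
  if odd `|i| then idfun : {linear A -> A} else \0.

Lemma GF_of_X (A : lmodType R) : X A -> GF X Yc A.
Proof.
move=> XA; exists (fun=> A), (@alt_map A); split=> //; split; [|split].
- move=> i; rewrite /alt_map odd_absz_add1.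
  by case: (odd _); [apply: exact3_0id | apply: exact3_id0].
- move=> Y _ i; rewrite /alt_map odd_absz_add1.
  by case: (odd _); [apply: texact3_0id | apply: texact3_id0].
- by exists idfun; split=> // c; split=> // _; exists c.
Qed.

End XGorensteinFlat.

Section Kernel.
Variables (R : pzRingType) (V W : lmodType R) (f : {linear V -> W}).

Definition kerP : pred V := fun v => f v == 0.

Lemma kerP_submod_closed : GRing.subsemimod_closed kerP.
Proof.
apply: GRing.submod_closed_semi; split=> [|a u v]; rewrite !unfold_in /kerP /=.
  by rewrite raddf0.
by move=> /eqP fu /eqP fv; rewrite linearP fu fv scaler0 addr0.
Qed.

HB.instance Definition _ := GRing.isSubmodClosed.Build R V kerP kerP_submod_closed.

Record kerT := KerT { kval : V; kvalP : kval \in kerP }.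
HB.instance Definition _ := [isSub for kval].
HB.instance Definition _ := [Choice of kerT by <:].
HB.instance Definition _ := [SubChoice_isSubLmodule of kerT by <:].

Lemma kerT_val0 (k : kerT) : f (val k) = 0.
Proof. exact/eqP/(kvalP k). Qed.

Definition ker_in (v : V) (fv0 : f v = 0) : kerT := KerT (introT eqP fv0).

Section Corestriction.
Variables (U : lmodType R) (F : {linear U -> V}) (fF0 : forall u, f (F u) = 0).

Definition ker_corestr (u : U) : kerT := ker_in (fF0 u).

Lemma ker_corestr_linear : linear ker_corestr.
Proof. by move=> a u v; apply: val_inj; rewrite /= !linearP. Qed.

HB.instance Definition _ :=
  GRing.isLinear.Build R U kerT *:%R ker_corestr ker_corestr_linear.

End Corestriction.
End Kernel.

Section LinearLift.
Variables (R : pzRingType) (U V W : lmodType R).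
Variables (h : {linear V -> W}) (phi : {linear U -> W}).
Hypothesis phi_in_img : forall u, exists v, phi u = h v.
Hypothesis h_inj : injective h.

Let lift_ex u : exists v, h v == phi u.
Proof. by have [v ->] := phi_in_img u; exists v. Qed.

Let lift u : V := xchoose (lift_ex u).

Let liftK u : h (lift u) = phi u.
Proof. exact/eqP/(xchooseP (lift_ex u)). Qed.

Let lift_linear : linear lift.
Proof. by move=> a x y; apply: h_inj; rewrite linearP /= !liftK linearP. Qed.

Definition lift_inj : {linear U -> V} :=
  HB.pack lift (GRing.isLinear.Build R U V *:%R lift lift_linear).

Lemma lift_injK u : h (lift_inj u) = phi u.
Proof. exact: liftK. Qed.

End LinearLift.

Section LinearPair.
Variables (R : pzRingType) (U V1 V2 : lmodType R).
Variables (F1 : {linear U -> V1}) (F2 : {linear U -> V2}).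

Definition lin_pair (u : U) : V1 * V2 := (F1 u, F2 u).

Lemma lin_pair_linear : linear lin_pair.
Proof. by move=> a x y; rewrite /lin_pair !linearP. Qed.

HB.instance Definition _ :=
  GRing.isLinear.Build R U (V1 * V2)%type *:%R lin_pair lin_pair_linear.

End LinearPair.

Arguments lin_pair {R U V1 V2} F1 F2 u /.

Section GorensteinFlatQuotient.
Variables (R : pzRingType) (X : lclass R) (Yc : rclass R) (G : lmodType R).
Variables (C : int -> lmodType R) (d : forall i : int, {linear C (i + 1) -> C i}).
Hypotheses (XC : forall i, X (C i)) (exC : forall i, exact3 (d (i + 1)) (d i))
  (texC : forall Y, Yc Y -> forall i, texact3 Y (d (i + 1)) (d i)).
Variable h : {linear G -> C (-2 + 1)}.
Hypotheses (h_inj : injective h) (im_h : forall c, d (-2) c = 0 <-> exists g, c = h g).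

Let d_in_img_h (c : C 0) : exists g, d (-1) c = h g.
Proof. exact/im_h/(exC (-2)).1. Qed.

Let p : {linear C 0 -> G} := lift_inj d_in_img_h h_inj.

Let pK c : h (p c) = d (-1) c.
Proof. exact: lift_injK. Qed.

Let p_surj g : exists c, p c = g.
Proof.
have [c dc] := (exC (-2)).2 (h g) (proj2 (im_h _) (ex_intro _ g erefl)).
by exists c; apply: h_inj; rewrite pK dc.
Qed.

Let p_eq0 c : (p c = 0) <-> (d (-1) c = 0).
Proof.
rewrite -pK; split=> [-> | hp0]; first by rewrite raddf0.
by apply: h_inj; rewrite hp0 raddf0.
Qed.

Let GF_ker_p : GF X Yc (kerT p).
Proof.
exists (fun i => C (i + 1)), (fun i => d (i + 1)).
split=> [i //|]; split=> [i|]; first exact: exC.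
split=> [Y YcY i|]; first exact: texC.
exists (val : {linear kerT p -> C 0}); split=> [|c]; first exact: val_inj.
split=> [dc0 | [k ->]]; last exact/p_eq0/kerT_val0.
by exists (ker_in (proj2 (p_eq0 c) dc0)).
Qed.

Let p_d0 (u : C (0 + 1)) : p (d 0 u) = 0.
Proof. exact/p_eq0/(exC (-1)).1. Qed.

Let tinj_ker_p Y : Yc Y -> tinj Y (val : kerT p -> C 0).
Proof.
move=> YcY; apply: (tinj_of_texact (q := ker_corestr p_d0) _ _ _ (texC YcY 0)) => //.
- move=> k; have [u du] := (exC (-1)).2 (val k) (proj1 (p_eq0 _) (kerT_val0 k)).
  by exists u; apply: val_inj.
- by move=> u; apply: val_inj; rewrite /= (exC 0).1.
Qed.

Lemma GF_X_quotient :
  exists (C0 : lmodType R) (p : {linear C0 -> G}),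
    [/\ X C0, forall g, exists c, p c = g, GF X Yc (kerT p) &
        forall Y, Yc Y -> tinj Y (val : kerT p -> C0)].
Proof.
by exists (C 0), p; split; [exact: XC | exact: p_surj | exact: GF_ker_p | exact: tinj_ker_p].
Qed.

End GorensteinFlatQuotient.

Record tex_cover (R : pzRingType) (X : lclass R) (Yc : rclass R) (M X0 K : lmodType R)
    (q : {linear X0 -> M}) (i : {linear K -> X0}) : Prop := {
  cover_X : X X0;
  cover_surj : forall m, exists x, q x = m;
  cover_inj : injective i;
  cover_exact : exact3 i q;
  cover_texact : forall Y, Yc Y -> texact3 Y i q;
  cover_tinj : forall Y, Yc Y -> tinj Y i;
  cover_res : has_tex_res Yc (GF X Yc) K }.

Section PullbackCover.
Variables (R : pzRingType) (X : lclass R) (Yc : rclass R).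
Hypothesis ext : ext_closed (GF X Yc).
Variables (M : lmodType R) (G : nat -> lmodType R) (d : forall n, {linear G n.+1 -> G n}).
Variable e : {linear G 0%N -> M}.
Hypotheses (GF_G : forall n, GF X Yc (G n)) (e_surj : forall m, exists g, e g = m).
Hypotheses (ex_e : exact3 (d 0%N) e) (ex_d : forall n, exact3 (d n.+1) (d n)).
Hypothesis tex_d : forall Y, Yc Y -> forall n, texact3 Y (d n.+1) (d n).
Variables (C0 : lmodType R) (p : {linear C0 -> G 0%N}).
Hypotheses (XC0 : X C0) (p_surj : forall g, exists c, p c = g).
Hypotheses (GF_K : GF X Yc (kerT p)) (tinj_K : forall Y, Yc Y -> tinj Y (val : kerT p -> C0)).

Local Notation K := (kerT p).
Let q : {linear C0 -> M} := e \o p.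
Local Notation L := (kerT q).
Let pb : {linear (C0 * G 1%N)%type -> G 0%N} := (p \o fst) \- (d 0%N \o snd).
Local Notation P := (kerT pb).

Let pbP (z : P) : p (val z).1 = d 0%N (val z).2.
Proof. by apply/eqP; rewrite -subr_eq0; apply/eqP/(kerT_val0 z). Qed.

Let pb_pair c g : p c = d 0%N g -> pb (c, g) = 0.
Proof. by move=> pc; rewrite /= pc subrr. Qed.

Let incl0 (k : K) : pb (lin_pair val \0 k) = 0.
Proof. by apply: pb_pair; rewrite raddf0; apply: kerT_val0. Qed.
Let incl : {linear K -> P} := ker_corestr incl0.

Let proj_G1 : {linear P -> G 1%N} := snd \o val.

Let sigma0 (g : G 2) : pb (lin_pair \0 (d 1%N) g) = 0.
Proof. by apply: pb_pair; rewrite raddf0 (ex_d 0%N).1. Qed.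
Let sigma : {linear G 2 -> P} := ker_corestr sigma0.

Let proj_C0 : {linear P -> C0} := fst \o val.

Let proj_L0 (z : P) : q (proj_C0 z) = 0.
Proof. by rewrite /= pbP; apply: ex_e.1. Qed.
Let proj_L : {linear P -> L} := ker_corestr proj_L0.

Let incl_inj : injective incl.
Proof. by move=> k k' /(congr1 (fun z => (val z).1)) /val_inj. Qed.

Let proj_G1_surj g : exists z, proj_G1 z = g.
Proof.
have [c pc] := p_surj (d 0%N g).
by exists (ker_in (pb_pair pc)).
Qed.

Let exact_incl_proj_G1 : exact3 incl proj_G1.
Proof.
split=> // z /= z2; have pz1 : p (val z).1 = 0 by rewrite pbP z2 raddf0.
exists (ker_in pz1); apply: val_inj.
by rewrite /= -z2 -surjective_pairing.
Qed.

Let GF_P : GF X Yc P.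
Proof. exact: (ext incl_inj exact_incl_proj_G1 proj_G1_surj GF_K (GF_G 1%N)). Qed.

Let proj_L_surj (l : L) : exists z, proj_L z = l.
Proof.
have [g dg] := ex_e.2 _ (kerT_val0 l).
have pl : p (val l) = d 0%N g by rewrite -dg.
by exists (ker_in (pb_pair pl)); apply: val_inj.
Qed.

Let exact_sigma_proj_L : exact3 sigma proj_L.
Proof.
split=> [g|z]; first exact: val_inj.
move=> /(congr1 val) /= z1; have : d 0%N (val z).2 = 0 by rewrite -pbP z1 raddf0.
move=> /(ex_d 0%N).2 [g dg]; exists g; apply: val_inj.
by rewrite /= -dg -z1 -surjective_pairing.
Qed.

Let exact_d2_sigma : exact3 (d 2) sigma.
Proof.
split=> [g|g /(congr1 (fun z => (val z).2)) /= dg]; last exact: (ex_d 1%N).2.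
by apply: val_inj; rewrite /= (ex_d 1%N).1.
Qed.

Let chase Y (YcY : Yc Y) (u : tfree Y P) :
  trel (tmap proj_C0 u) -> exists s, trel (u - tmap sigma s).
Proof.
move=> r1u; have r_d0 : trel (tmap (d 0%N) (tmap proj_G1 u)).
  have -> : tmap (d 0%N) (tmap proj_G1 u) = tmap p (tmap proj_C0 u).
    by rewrite !tmap_comp; apply: eq_tmap => z /=; rewrite pbP.
  exact: trel_tmap.
have [s rs] := (tex_d YcY 0%N).2 _ r_d0.
have : trel (tmap proj_G1 (u - tmap sigma s)) by rewrite tmapB tmap_comp.
move=> /(tmap_right_exact proj_G1_surj exact_incl_proj_G1.2) [w rw].
have rw0 : trel w.
  apply: (tinj_K YcY).
  have -> : tmap val w = tmap proj_C0 (tmap incl w) by rewrite tmap_comp.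
  rewrite -[tmap incl w](subKr (u - tmap sigma s)) tmapB.
  apply: trelB; last exact: trel_tmap.
  rewrite tmapB; apply: trelB => //.
  by rewrite tmap_comp; apply: trel_tmap0.
exists s; rewrite -(subrK (tmap incl w) (u - tmap sigma s)).
by apply: trelD => //; apply: trel_tmap.
Qed.

Let tinj_L Y : Yc Y -> tinj Y (val : L -> C0).
Proof.
move=> YcY v; have [u <-] := tmap_surj proj_L_surj v.
rewrite tmap_comp => /(chase YcY) [s rs].
rewrite -(subrK (tmap sigma s) u) tmapD; apply: trelD; first exact: trel_tmap.
by rewrite tmap_comp; apply: trel_tmap0 => g; apply: exact_sigma_proj_L.1.
Qed.

Let texact_sigma_proj_L Y : Yc Y -> texact3 Y sigma proj_L.
Proof.
move=> YcY; split=> [s|t /(trel_tmap (val : {linear L -> C0})) r1t].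
  by rewrite tmap_comp; apply: trel_tmap0 => g; apply: exact_sigma_proj_L.1.
by rewrite tmap_comp in r1t; apply: (chase YcY).
Qed.

Let texact_d2_sigma Y : Yc Y -> texact3 Y (d 2) sigma.
Proof.
move=> YcY; split=> [s|t /(trel_tmap proj_G1) r2t].
  by rewrite tmap_comp; apply: trel_tmap0 => g; apply: exact_d2_sigma.1.
by rewrite tmap_comp in r2t; apply: (tex_d YcY 1%N).2.
Qed.

Let A (n : nat) : lmodType R := if n is n'.+1 then G n'.+2 else P.

Let dA (n : nat) : {linear A n.+1 -> A n} :=
  match n return {linear A n.+1 -> A n} with 0 => sigma | n'.+1 => d n'.+2 end.

Let res_L : has_tex_res Yc (GF X Yc) L.
Proof.
exists A, dA, proj_L; split; first by case=> [|n]; [exact: GF_P | exact: GF_G].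
split; first exact: proj_L_surj.
split; first exact: exact_sigma_proj_L.
split; first by case=> [|n]; [exact: exact_d2_sigma | exact: ex_d].
move=> Y YcY; split; first exact/tsurj_of_surj/proj_L_surj.
split; first exact: texact_sigma_proj_L.
by case=> [|n]; [exact: texact_d2_sigma | exact: tex_d].
Qed.

Lemma pullback_cover : tex_cover X Yc q (val : {linear L -> C0}).
Proof.
have q_surj m : exists c, q c = m.
  by have [g <-] := e_surj m; have [c <-] := p_surj g; exists c.
split; [exact: XC0 | exact: q_surj | exact: val_inj | | | exact: tinj_L | exact: res_L].
- by split=> [l | c qc]; [exact: kerT_val0 | exists (ker_in qc)].
- move=> Y YcY; split=> [s | t]; first by rewrite tmap_comp; apply/trel_tmap0/kerT_val0.
  by apply: tmap_right_exact => // c qc; exists (ker_in qc).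
Qed.

End PullbackCover.

Lemma tex_cover_exists (R : pzRingType) (X : lclass R) (Yc : rclass R) (M : lmodType R) :
  ext_closed (GF X Yc) -> has_tex_res Yc (GF X Yc) M ->
  exists (X0 K : lmodType R) (q : {linear X0 -> M}) (i : {linear K -> X0}),
    tex_cover X Yc q i.
Proof.
move=> ext [G [d [e [GF_G [e_surj [ex_e [ex_d tex]]]]]]].
have [C [dC [XC [exC [texC [h [h_inj im_h]]]]]]] := GF_G 0%N.
have [C0 [p [XC0 p_surj GF_K tinj_K]]] := GF_X_quotient XC exC texC h_inj im_h.
exists C0, (kerT (e \o p)), (e \o p), val.
exact: (pullback_cover ext GF_G e_surj ex_e ex_d (fun Y YcY => (tex Y YcY).2.2)
  XC0 p_surj GF_K tinj_K).
Qed.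

Section Iteration.
Variables (R : pzRingType) (X : lclass R) (Yc : rclass R).
Hypothesis ext : ext_closed (GF X Yc).

Record cover_data (M : lmodType R) := CoverData {
  cover_src : lmodType R;
  cover_ker : lmodType R;
  cover_map : {linear cover_src -> M};
  cover_incl : {linear cover_ker -> cover_src} }.

Let resolvable := {M : lmodType R | has_tex_res Yc (GF X Yc) M}.

Let choose_cover (s : resolvable) :
  {c : cover_data (sval s) | tex_cover X Yc (cover_map c) (cover_incl c)}.
Proof.
apply: constructive_indefinite_description.
have [X0 [K [q [i cov]]]] := tex_cover_exists ext (svalP s).
by exists (CoverData q i).
Qed.

Let next (s : resolvable) : resolvable :=
  exist _ (cover_ker (sval (choose_cover s))) (cover_res (svalP (choose_cover s))).

Variables (M : lmodType R) (HM : has_tex_res Yc (GF X Yc) M).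

Let cov k := sval (choose_cover (iter k next (exist _ M HM))).
Let covP k := svalP (choose_cover (iter k next (exist _ M HM))).
Let Xk k := cover_src (cov k).
Let D k : {linear Xk k.+1 -> Xk k} := cover_incl (cov k) \o cover_map (cov k.+1).

Lemma X_resolution_of_GF_resolution : has_tex_res Yc X M.
Proof.
exists Xk, D, (cover_map (cov 0)); split; first by move=> n; apply: cover_X (covP n).
split; first exact: cover_surj (covP 0).
split; first exact: exact3_surj_comp (cover_surj (covP 1)) (cover_exact (covP 0)).
split.
  move=> n; apply: exact3_comp_inj (cover_inj (covP n)) _.
  exact: exact3_surj_comp (cover_surj (covP n.+2)) (cover_exact (covP n.+1)).
move=> Y YcY; split; first exact/tsurj_of_surj/(cover_surj (covP 0)).
split; first exact: texact3_surj_comp (cover_surj (covP 1)) (cover_texact (covP 0) YcY).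
move=> n; apply: texact3_comp_inj (cover_tinj (covP n) YcY) _.
exact: texact3_surj_comp (cover_surj (covP n.+2)) (cover_texact (covP n.+1) YcY).
Qed.

End Iteration.

Unset Implicit Arguments.

Theorem lemma2p1 (R : pzRingType) (X : lclass R) (Yc : rclass R) :
  ext_closed (GF X Yc) ->
  forall M : lmodType R,
    has_tex_res Yc X M <-> has_tex_res Yc (GF X Yc) M.
Proof.
move=> ext M; split; last exact: X_resolution_of_GF_resolution.
move=> [A [d [e [XA res]]]]; exists A, d, e; split=> // n.
exact: GF_of_X.
Qed.
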